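(* Let $G$ be a finite group with identity $\iota$ and let $(C_1,C_2,C_3,C_4)$ be a class vector of $G$. For $k\in\{1,2,3\}$ let $$\mathrm{Fix}_k=\{[\underline{\sigma}]\in\Sigma^i(C_1,C_2,C_3,C_4) \mid [\underline{\sigma}]^{\varphi_{4,k}}=[\underline{\sigma}]\}.$$ Then for every $k\in\{1,2,3\}$, every $\beta\in B_4$ and every $[\underline{\sigma}]\in\Sigma^i(C_1,C_2,C_3,C_4)$ we have $[\underline{\sigma}]\in \mathrm{Fix}_k$ if and only if $[\underline{\sigma}]^{\beta}\in\mathrm{Fix}_k$. In other words, the function $F_{B_4}(F_{4,k},\cdot)$ on $\Sigma^i(C_1,C_2,C_3,C_4)$, equal to $1$ on fixed points of $F_{4,k}=\langle\varphi_{4,k}\rangle$ and $-1$ otherwise, is invariant under the action of $B_4$.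
   Context: A class vector of length $m$ is a tuple $(C_1,\dots,C_m)$ of non-trivial conjugacy classes of $G$. $\Sigma(C_1,\dots,C_m)$ is the set of tuples $(\sigma_1,\dots,\sigma_m)$ with $\sigma_i\in C_i$, $\langle\sigma_1,\dots,\sigma_m\rangle=G$ and $\sigma_1\cdots\sigma_m=\iota$; $G$ acts on it by simultaneous conjugation and $\Sigma^i(C_1,\dots,C_m)$ is the set of orbits, the orbit of $(\sigma_1,\dots,\sigma_m)$ being written $[\sigma_1,\dots,\sigma_m]$. $\Sigma^i(C_1,\dots,C_m)^{sy}$ is the union of $\Sigma^i(C_{\pi(1)},\dots,C_{\pi(m)})$ over $\pi\in S_m$. The Hurwitz braid group $H_4$ is generated by $\beta_2,\beta_3,\beta_4$ with relations $\beta_2\beta_4=\beta_4\beta_2$, $\beta_2\beta_3\beta_2=\beta_3\beta_2\beta_3$, $\beta_3\beta_4\beta_3=\beta_4\beta_3\beta_4$, $\beta_2\beta_3\beta_4^2\beta_3\beta_2=1$; it acts from the right on $\Sigma^i(C_1,\dots,C_4)^{sy}$ by $[\underline{\sigma}]^{\beta_2}=[\sigma_1\sigma_2\sigma_1^{-1},\sigma_1,\sigma_3,\sigma_4]$, $[\underline{\sigma}]^{\beta_3}=[\sigma_1,\sigma_2\sigma_3\sigma_2^{-1},\sigma_2,\sigma_4]$, $[\underline{\sigma}]^{\beta_4}=[\sigma_1,\sigma_2,\sigma_3\sigma_4\sigma_3^{-1},\sigma_3]$. The pure braid group $B_4$ is generated by $\beta_{ij}=\beta_{i+1}^{-1}\cdots\beta_{j-1}^{-1}\beta_j^2\beta_{j-1}\cdots\beta_{i+1}$,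 $1\le i<j\le 4$; it maps $\Sigma^i(C_1,\dots,C_4)$ to itself. Put $\varphi_{4,1}=\beta_2\beta_4^{-1}$, $\varphi_{4,2}=(\beta_2\beta_3\beta_4)^2$, $\varphi_{4,3}=\varphi_{4,1}\varphi_{4,2}$; they act by $[\underline{\sigma}]^{\varphi_{4,1}}=[\sigma_2,\sigma_1,\sigma_1^{-1}\sigma_4\sigma_1,\sigma_1^{-1}\sigma_4^{-1}\sigma_3\sigma_4\sigma_1]$, $[\underline{\sigma}]^{\varphi_{4,2}}=[\sigma_3,\sigma_4,\sigma_1,\sigma_2]$, $[\underline{\sigma}]^{\varphi_{4,3}}=[\sigma_4,\sigma_4^{-1}\sigma_3\sigma_4,\sigma_1\sigma_2\sigma_1^{-1},\sigma_1]$. *)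

From mathcomp Require Import all_boot all_fingroup.
Set Implicit Arguments. Unset Strict Implicit. Unset Printing Implicit Defensive.
Local Open Scope group_scope.

Record tup4 (gT : finGroupType) := T4 { s1 : gT; s2 : gT; s3 : gT; s4 : gT }.
Arguments T4 {gT}.

Section Defs.
Variable gT : finGroupType.

Definition nontriv_class (C : {set gT}) : Prop :=
  C \in classes [set: gT] /\ 1 \notin C.

Definition inSigma (C1 C2 C3 C4 : {set gT}) (s : tup4 gT) : Prop :=
  [/\ s1 s \in C1, s2 s \in C2, s3 s \in C3 & s4 s \in C4] /\
  <<[set s1 s; s2 s; s3 s; s4 s]>> = [set: gT] /\
  s1 s * s2 s * s3 s * s4 s = 1.

(* simultaneous conjugation; x ^ g = g^-1 x g *)
Definition conj4 (s : tup4 gT) (g : gT) : tup4 gT :=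
  T4 (s1 s ^ g) (s2 s ^ g) (s3 s ^ g) (s4 s ^ g).

Definition same_orbit (s t : tup4 gT) : Prop := exists g : gT, t = conj4 s g.

(* Hurwitz generators beta_2, beta_3, beta_4; letter (b, true) = b^-1 *)
Inductive hgen := B2 | B3 | B4.
Definition letter := (hgen * bool)%type.
Definition hword := seq letter.

(* right actions of beta_i and beta_i^-1 on tuples; a b a^-1 = b ^ a^-1 *)
Definition act_letter (s : tup4 gT) (l : letter) : tup4 gT :=
  let: T4 a b c d := s in
  match l with
  | (B2, false) => T4 (b ^ a^-1) a c d
  | (B2, true)  => T4 b (a ^ b) c d
  | (B3, false) => T4 a (c ^ b^-1) b d
  | (B3, true)  => T4 a c (b ^ c) d
  | (B4, false) => T4 a b (d ^ c^-1) c
  | (B4, true)  => T4 a b d (c ^ d)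
  end.

Definition act_word (s : tup4 gT) (w : hword) : tup4 gT := foldl act_letter s w.

End Defs.

Definition inv_word (w : hword) : hword :=
  rev [seq (l.1, ~~ l.2) | l <- w].

Definition hgen_of_nat (m : nat) : hgen :=
  match m with 2 => B2 | 3 => B3 | _ => B4 end.

(* beta_ij = beta_{i+1}^-1 ... beta_{j-1}^-1 beta_j^2 beta_{j-1} ... beta_{i+1} *)
Definition beta_ij (i j : nat) : hword :=
  [seq (hgen_of_nat m, true) | m <- iota i.+1 (j - i.+1)]
  ++ [:: (hgen_of_nat j, false); (hgen_of_nat j, false)]
  ++ [seq (hgen_of_nat m, false) | m <- rev (iota i.+1 (j - i.+1))].

(* elements of the pure braid group B_4: words in beta_ij^{+-1};
   entry (i, j, e) with e = true meaning beta_ij^-1 *)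
Definition pword := seq (nat * nat * bool).

Definition valid_pword (w : pword) : bool :=
  all (fun x => let: (i, j, _) := x in (1 <= i < j) && (j <= 4)) w.

Definition hword_of_pword (w : pword) : hword :=
  flatten [seq let: (i, j, e) := x in
               if e then inv_word (beta_ij i j) else beta_ij i j | x <- w].

Definition phi41 : hword := [:: (B2, false); (B4, true)].
Definition phi42 : hword :=
  [:: (B2, false); (B3, false); (B4, false); (B2, false); (B3, false); (B4, false)].
Definition phi43 : hword := phi41 ++ phi42.

Definition phi4 (k : nat) : hword :=
  match k with 1 => phi41 | 2 => phi42 | _ => phi43 end.

Definition inFix (gT : finGroupType) (k : nat) (s : tup4 gT) : Prop :=
  same_orbit (act_word s (phi4 k)) s.

From mathcomp Require Import all_boot all_fingroup.
Set Implicit Arguments. Unset Strict Implicit. Unset Printing Implicit Defensive.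

(* On tuples with s1 s2 s3 s4 = 1, every pure braid commutes with each phi_{4,k}
   up to simultaneous conjugation; hence B_4 maps fixed points of phi_{4,k} on
   orbits to fixed points, and so does its inverse.  Commutation up to conjugation is stable under products and
   inverses, and phi_{4,3} = phi_{4,1} phi_{4,2}, so it suffices to compare
   phi_{4,1}, phi_{4,2} with the six generators beta_ij.  This is done on the
   generic tuple (x0, x1, x2, (x0 x1 x2)^-1) of the free group on x0, x1, x2,
   by computing both sides as reduced words and exhibiting the conjugator. *)

Section Action.
Local Open Scope group_scope.
Variable gT : finGroupType.
Implicit Types (t : tup4 gT) (g : gT) (l : letter) (w v : hword).

Definition prod4 t : gT := s1 t * s2 t * s3 t * s4 t.

Lemma act_word_cons t l w : act_word t (l :: w) = act_word (act_letter t l) w.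
Proof. by []. Qed.

Lemma prod4_act_letter t l : prod4 (act_letter t l) = prod4 t.
Proof.
case: t => a b c d; case: l => [[] []]; rewrite /prod4 /=.
- by rewrite -conjgC.
- by rewrite -conjgCV.
- by rewrite -(mulgA a) -conjgC mulgA.
- by rewrite -(mulgA a) -conjgCV mulgA.
- by rewrite -(mulgA (a * b)) -conjgC mulgA.
- by rewrite -(mulgA (a * b)) -conjgCV mulgA.
Qed.

Lemma prod4_act_word t w : prod4 (act_word t w) = prod4 t.
Proof. by elim: w t => [|l w IHw] t //; rewrite act_word_cons IHw prod4_act_letter. Qed.

Lemma act_word_cat t w v : act_word t (w ++ v) = act_word (act_word t w) v.
Proof. exact: foldl_cat. Qed.

Lemma act_letterK t l : act_letter (act_letter t l) (l.1, ~~ l.2) = t.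
Proof.
case: t => a b c d; case: l => [[] []] /=; congr T4;
  by rewrite ?conjgK ?conjgKV ?invgK -?conjgM ?mulVg ?mulgV ?conjg1 ?conjgKV.
Qed.

Lemma act_wordK t w : act_word (act_word t w) (inv_word w) = t.
Proof.
elim: w t => [|l w IHw] t //=.
by rewrite /inv_word map_cons rev_cons -cats1 act_word_cat IHw; apply: act_letterK.
Qed.

Lemma act_letter_conj4 t g l : act_letter (conj4 t g) l = conj4 (act_letter t l) g.
Proof.
case: t => a b c d; case: l => [[] []]; rewrite /conj4 /=; congr T4;
  by rewrite -?conjVg -conjJg.
Qed.

Lemma act_word_conj4 t g w : act_word (conj4 t g) w = conj4 (act_word t w) g.
Proof. by elim: w t => [|l w IHw] t //; rewrite !act_word_cons act_letter_conj4 IHw. Qed.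

Lemma same_orbit_refl t : same_orbit t t.
Proof. by exists 1; case: t => a b c d; rewrite /conj4 /= !conjg1. Qed.

Lemma same_orbit_sym t1 t2 : same_orbit t1 t2 -> same_orbit t2 t1.
Proof. by case=> g ->; exists g^-1; case: t1 => a b c d; rewrite /conj4 /= !conjgK. Qed.

Lemma same_orbit_trans t1 t2 t3 :
  same_orbit t1 t2 -> same_orbit t2 t3 -> same_orbit t1 t3.
Proof.
by case=> g -> [h ->]; exists (g * h); case: t1 => a b c d; rewrite /conj4 /= !conjgM.
Qed.

Lemma same_orbit_act t1 t2 w :
  same_orbit t1 t2 -> same_orbit (act_word t1 w) (act_word t2 w).
Proof. by case=> g ->; exists g; rewrite act_word_conj4. Qed.

Lemma inv_wordK : involutive inv_word.
Proof.
move=> w; rewrite /inv_word map_rev revK -map_comp.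
by rewrite (eq_map (g := id)) ?map_id // => -[h e] /=; rewrite negbK.
Qed.

Lemma act_wordKV t w : act_word (act_word t (inv_word w)) w = t.
Proof. by rewrite -{2}(inv_wordK w) act_wordK. Qed.

Definition conj_commute (w v : hword) : Prop :=
  forall t, prod4 t = 1 -> same_orbit (act_word t (w ++ v)) (act_word t (v ++ w)).

Lemma conj_commute_sym w v : conj_commute w v -> conj_commute v w.
Proof. by move=> wv t /wv; apply: same_orbit_sym. Qed.

Lemma conj_commute_nil w : conj_commute w [::].
Proof. by move=> t _; rewrite cats0; apply: same_orbit_refl. Qed.

Lemma conj_commute_cat w v1 v2 :
  conj_commute w v1 -> conj_commute w v2 -> conj_commute w (v1 ++ v2).
Proof.
move=> wv1 wv2 t prod_t; apply: (@same_orbit_trans _ (act_word t (v1 ++ w ++ v2))).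
  by rewrite !catA !(act_word_cat t _ v2); apply: same_orbit_act; apply: wv1.
rewrite -catA !(act_word_cat t v1); apply: wv2.
by rewrite prod4_act_word.
Qed.

Lemma conj_commute_inv w v : conj_commute w v -> conj_commute w (inv_word v).
Proof.
move=> wv t prod_t; apply: same_orbit_sym.
have := wv (act_word t (inv_word v)); rewrite prod4_act_word => /(_ prod_t).
move/(same_orbit_act (inv_word v)).
by rewrite !act_word_cat act_wordKV act_wordK.
Qed.

Lemma act_fixed_orbit w v t : conj_commute w v -> prod4 t = 1 ->
  same_orbit (act_word t w) t <->
  same_orbit (act_word (act_word t v) w) (act_word t v).
Proof.
move=> wv prod_t; have wvt := wv t prod_t; rewrite !act_word_cat in wvt; split=> fix_t.
  exact: same_orbit_trans (same_orbit_sym wvt) (same_orbit_act v fix_t).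
have := same_orbit_act (inv_word v) (same_orbit_trans wvt fix_t).
by rewrite !act_wordK.
Qed.

End Action.

(* Free group words; the letter (n, b) stands for x_n, or x_n^-1 when b. *)
Definition fword := seq (nat * bool).

Definition fword_inv (w : fword) : fword := rev [seq (x.1, ~~ x.2) | x <- w].

Definition cons_reduced (x : nat * bool) (w : fword) : fword :=
  if w is y :: w' then if (y.1 == x.1) && (y.2 != x.2) then w' else x :: w
  else [:: x].

(* On reduced words [==] decides equality in the free group. *)
Definition fword_reduce (w : fword) : fword := foldr cons_reduced [::] w.

Definition fword_conj (w v : fword) : fword := fword_reduce (fword_inv v ++ w ++ v).

Definition ftuple := (fword * fword * fword * fword)%type.

Definition ftuple_act_letter (T : ftuple) (l : letter) : ftuple :=
  let: (a, b, c, d) := T in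
  match l with
  | (B2, false) => (fword_conj b (fword_inv a), a, c, d)
  | (B2, true)  => (b, fword_conj a b, c, d)
  | (B3, false) => (a, fword_conj c (fword_inv b), b, d)
  | (B3, true)  => (a, c, fword_conj b c, d)
  | (B4, false) => (a, b, fword_conj d (fword_inv c), c)
  | (B4, true)  => (a, b, d, fword_conj c d)
  end.

Definition ftuple_act_word (T : ftuple) (w : hword) : ftuple := foldl ftuple_act_letter T w.

Definition ftuple_conj (T : ftuple) (g : fword) : ftuple :=
  let: (a, b, c, d) := T in
  (fword_conj a g, fword_conj b g, fword_conj c g, fword_conj d g).

Section FreeWordEval.
Local Open Scope group_scope.
Variables (gT : finGroupType) (e : seq gT).
Implicit Types (w v : fword) (T : ftuple).

Definition fletter_eval (x : nat * bool) : gT :=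
  if x.2 then (nth 1 e x.1)^-1 else nth 1 e x.1.

Definition fword_eval w : gT := foldr (fun x g => fletter_eval x * g) 1 w.

Lemma fword_eval_cat w v : fword_eval (w ++ v) = fword_eval w * fword_eval v.
Proof. by elim: w => [|x w IHw] /=; rewrite ?mul1g // IHw mulgA. Qed.

Lemma fword_eval_inv w : fword_eval (fword_inv w) = (fword_eval w)^-1.
Proof.
elim: w => [|x w IHw] /=; first by rewrite invg1.
rewrite /fword_inv map_cons rev_cons -cats1 fword_eval_cat -/(fword_inv w) IHw.
by rewrite invMg /= mulg1 /fletter_eval /=; case: x.2; rewrite ?invgK.
Qed.

Lemma fword_eval_cons_reduced x w :
  fword_eval (cons_reduced x w) = fletter_eval x * fword_eval w.
Proof.
case: x => n b; case: w => [|[m b'] w] //=; case: ifP => // /andP[/eqP-> /negPf].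
by rewrite /fletter_eval mulgA; case: b b' => [] [] //= _; rewrite ?mulgV ?mulVg mul1g.
Qed.

Lemma fword_eval_reduce w : fword_eval (fword_reduce w) = fword_eval w.
Proof. by elim: w => [|x w IHw] //=; rewrite fword_eval_cons_reduced IHw. Qed.

Lemma fword_eval_conj w v : fword_eval (fword_conj w v) = fword_eval w ^ fword_eval v.
Proof. by rewrite fword_eval_reduce !fword_eval_cat fword_eval_inv conjgE. Qed.

Definition ftuple_eval T : tup4 gT :=
  let: (a, b, c, d) := T in T4 (fword_eval a) (fword_eval b) (fword_eval c) (fword_eval d).

Lemma ftuple_eval_act_letter T l :
  ftuple_eval (ftuple_act_letter T l) = act_letter (ftuple_eval T) l.
Proof.
by case: T => [[[a b] c] d]; case: l => [[] []] /=; rewrite fword_eval_conj ?fword_eval_inv.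
Qed.

Lemma ftuple_eval_act_word T (h : hword) :
  ftuple_eval (ftuple_act_word T h) = act_word (ftuple_eval T) h.
Proof.
elim: h T => [|l h IHh] T //.
by rewrite act_word_cons -ftuple_eval_act_letter -IHh.
Qed.

Lemma ftuple_eval_conj T g :
  ftuple_eval (ftuple_conj T g) = conj4 (ftuple_eval T) (fword_eval g).
Proof. by case: T => [[[a b] c] d] /=; rewrite !fword_eval_conj. Qed.

End FreeWordEval.

Definition generic_ftuple : ftuple :=
  ([:: (0, false)], [:: (1, false)], [:: (2, false)], [:: (2, true); (1, true); (0, true)]).

Lemma ftuple_eval_generic (gT : finGroupType) (t : tup4 gT) :
  prod4 t = 1%g -> ftuple_eval [:: s1 t; s2 t; s3 t] generic_ftuple = t.
Proof.
case: t => a b c d prod_t; rewrite /= !mulg1 -!invMg /=; congr T4.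
by apply/eqP; rewrite eq_invg_mul; apply/eqP.
Qed.

Definition conj_commute_cert (w v : hword) (g : fword) : bool :=
  ftuple_act_word generic_ftuple (w ++ v)
  == ftuple_conj (ftuple_act_word generic_ftuple (v ++ w)) g.

Lemma conj_commute_certP (gT : finGroupType) w v g :
  conj_commute_cert w v g -> conj_commute gT w v.
Proof.
move/eqP=> cert t prod_t; rewrite -(ftuple_eval_generic prod_t).
apply: same_orbit_sym; exists (fword_eval [:: s1 t; s2 t; s3 t] g).
by rewrite -!ftuple_eval_act_word cert ftuple_eval_conj.
Qed.

(* Found by computer; in the remaining cases the two words commute exactly. *)
Definition phi_beta_conjugator (k i j : nat) : fword :=
  match k, i, j with
  | 1, 1, 3 => [:: (0, false); (1, false); (2, false); (1, true)]
  | 1, 1, 4 => [:: (2, true); (1, true)]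
  | 1, 2, 3 => [:: (0, false); (1, false); (2, false); (0, true)]
  | 1, 2, 4 => [:: (2, true); (0, true)]
  | 2, 1, 2 => [:: (0, false); (1, false)]
  | 2, 1, 3 => [:: (0, false); (1, false); (2, false); (1, true); (0, false);
                   (1, false); (2, true); (1, true); (0, true); (0, true)]
  | 2, 1, 4 => [:: (2, true); (1, true); (0, false); (1, false); (2, false);
                   (1, false); (2, true); (1, true); (1, true); (0, true)]
  | 2, 2, 3 => [:: (0, false); (1, false); (2, false); (0, true)]
  | 2, 2, 4 => [:: (2, true); (1, false); (2, false); (0, false); (1, true); (0, true)]
  | 2, 3, 4 => [:: (1, true); (0, true)]
  | _, _, _ => [::]
  end.

Lemma phi_beta_conj_commute (gT : finGroupType) k i j :
  k \in [:: 1; 2] -> 1 <= i < j -> j <= 4 -> conj_commute gT (phi4 k) (beta_ij i j).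
Proof.
move=> k12 ij j_le4; apply: conj_commute_certP (phi_beta_conjugator k i j) _.
case: k k12 => [|[|[|k]]] // _;
  case: i ij => [|[|[|[|i]]]] //; case: j j_le4 => [|[|[|[|[|j]]]]] //;
  by vm_compute.
Qed.

Lemma phi12_pure_conj_commute (gT : finGroupType) k (beta : pword) :
  k \in [:: 1; 2] -> valid_pword beta -> conj_commute gT (phi4 k) (hword_of_pword beta).
Proof.
move=> k12; elim: beta => [|[[i j] e] beta IHbeta] /=.
  by move=> _; apply: conj_commute_nil.
case/andP=> /andP[ij j_le4] /IHbeta; apply: conj_commute_cat.
by case: e; [apply: conj_commute_inv|]; apply: phi_beta_conj_commute.
Qed.

Lemma phi_pure_conj_commute (gT : finGroupType) k (beta : pword) :
  1 <= k <= 3 -> valid_pword beta -> conj_commute gT (phi4 k) (hword_of_pword beta).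
Proof.
case: k => [|[|[|[|k]]]] // _ valid_beta; try by apply: phi12_pure_conj_commute.
apply/conj_commute_sym/conj_commute_cat; apply: conj_commute_sym.
  exact: (phi12_pure_conj_commute (k := 1)).
exact: (phi12_pure_conj_commute (k := 2)).
Qed.

Theorem theorem1 (gT : finGroupType) (C1 C2 C3 C4 : {set gT})
  (hC1 : nontriv_class C1) (hC2 : nontriv_class C2)
  (hC3 : nontriv_class C3) (hC4 : nontriv_class C4)
  (k : nat) (hk : 1 <= k <= 3) (beta : pword) (hbeta : valid_pword beta)
  (s : tup4 gT) (hs : inSigma C1 C2 C3 C4 s) :
  inFix k s <-> inFix k (act_word s (hword_of_pword beta)).
Proof.
case: hs => _ [_ prod_s]; apply: act_fixed_orbit prod_s.
exact: phi_pure_conj_commute.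
Qed.
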